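(* Let $a, b$ be real numbers with $1 < a \leq b$, and let $$A = \bigcup_{k=0}^{\infty} \big([b^k, a b^k) \cap \mathbb{N}\big).$$ Then $A$ is fractionally dense if and only if $b \leq a^2$. Moreover, $\underline{d}(A) = \frac{a-1}{b-1}$.
   Context: $\mathbb{N} = \{1,2,3,\ldots\}$. For $A \subseteq \mathbb{N}$, the quotient set is $R(A) = \{a/a' : a, a' \in A\}$, and $A$ is called fractionally dense if the closure of $R(A)$ in $\mathbb{R}$ equals $[0,\infty)$. For $A \subseteq \mathbb{N}$ and $x>0$ let $A(x) = A \cap [1,x]$; the lower asymptotic density of $A$ is $\underline{d}(A) = \liminf_{n\to\infty} |A(n)|/n$. *)

From mathcomp Require Import all_boot all_order all_algebra.
From mathcomp Require Import all_classical all_reals all_analysis.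
Unset Strict Implicit. Unset Printing Implicit Defensive.
Import Order.TTheory GRing.Theory Num.Theory numFieldNormedType.Exports.
Local Open Scope classical_set_scope.
Local Open Scope ring_scope.

(* Subsets of N = {1,2,3,...} are represented as A : set nat with 0 \notin A. *)
Definition quotient_set (R : realType) (A : set nat) : set R :=
  [set x | exists p q : nat, A p /\ A q /\ x = p%:R / q%:R].

Definition fractionally_dense (R : realType) (A : set nat) : Prop :=
  closure (quotient_set R A) = [set x : R | 0 <= x].

Definition count_upto (A : set nat) (n : nat) : nat :=
  (\sum_(1 <= k < n.+1) (asbool (A k) : nat))%N.

Definition lower_density (R : realType) (A : set nat) : \bar R :=
  limn_einf (fun n : nat => ((count_upto A n)%:R / n%:R : R)%:E).

Definition Aab (R : realType) (a b : R) : set nat :=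
  [set m : nat | (0 < m)%N /\ exists k : nat, b ^+ k <= m%:R /\ m%:R < a * b ^+ k].

From mathcomp Require Import all_boot all_order all_algebra.
From mathcomp Require Import all_classical all_reals all_analysis.
From mathcomp Require Import ring lra.
Import Order.TTheory GRing.Theory Num.Theory numFieldNormedType.Exports.
Local Open Scope classical_set_scope.
Local Open Scope ring_scope.

Section Powers.
Context {R : realType}.
Implicit Types (b t x y : R).

Lemma bernoulli_ineq t n : 0 <= t -> 1 + n%:R * t <= (1 + t) ^+ n.
Proof.
move=> t0; elim: n => [|n IH]; first by rewrite expr0 mul0r addr0.
have IHt : (1 + n%:R * t) * t <= (1 + t) ^+ n * t by rewrite ler_wpM2r.
have : 0 <= n%:R * t * t by rewrite !mulr_ge0.
rewrite exprS -natr1; nra.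
Qed.

Lemma expr_unbounded {b} y : 1 < b -> exists n, y < b ^+ n.
Proof.
move=> b1; have b1' : 0 < b - 1 by rewrite subr_gt0.
have /andP[_] := truncn_itv (normr_ge0 (y / (b - 1))).
set n := Num.truncn _ => yn; exists n.+1.
have := @bernoulli_ineq (b - 1) n.+1 (ltW b1'); rewrite subrKC.
have : y / (b - 1) < n.+1%:R by apply: le_lt_trans yn; exact: ler_norm.
rewrite ltr_pdivrMr //; lra.
Qed.

Lemma expr_floor_log {b y} : 1 < b -> 1 <= y ->
  exists j, b ^+ j <= y /\ y < b ^+ j.+1.
Proof.
move=> b1 y1; have [N] := expr_unbounded y b1.
elim: N => [|N IH] yN; first by rewrite expr0 in yN; lra.
by case: (ltP y (b ^+ N)) => [/IH|]; last exists N.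
Qed.

Lemma sqr_succ_le_expr {b} : 1 < b ->
  exists c, 0 < c /\ forall k : nat, (k%:R + 1) ^+ 2 <= c * b ^+ k.
Proof.
move=> b1; set s := Num.sqrt b.
have s1 : 1 < s by rewrite -sqrtr1 ltr_sqrt // (lt_trans ltr01).
have ss : s ^+ 2 = b by rewrite sqr_sqrtr // ltW // (lt_trans ltr01).
exists (b / (s - 1) ^+ 2); split; first by rewrite divr_gt0 ?exprn_gt0 ?subr_gt0 // (lt_trans ltr01).
move=> k; rewrite mulrC mulrA ler_pdivlMr ?exprn_gt0 ?subr_gt0 //.
have hk : (s - 1) * (k%:R + 1) <= s ^+ k.+1.
  have := @bernoulli_ineq (s - 1) k; rewrite subrKC exprS.
  have : 0 <= k%:R * (s - 1) by rewrite mulr_ge0 // subr_ge0 ltW.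
  nra.
rewrite -exprMn mulrC -ss -exprM mulnC exprM -exprMn -exprS.
have s0 : 0 <= s - 1 by rewrite subr_ge0 ltW.
by rewrite ler_pXn2r ?nnegrE ?mulr_ge0 ?exprn_ge0 ?(le_trans ler01 (ltW s1)) // mulrC.
Qed.

Lemma expr_exponent_negligible {b} (d : R) : 1 < b -> 0 < d -> exists N : nat,
  forall n k : nat, (N <= n)%N -> b ^+ k <= n%:R + 1 -> k%:R + 1 <= d * n%:R.
Proof.
move=> b1 d0; have [c [c0 hc]] := sqr_succ_le_expr b1.
have c2 : 0 <= 2 * c / d ^+ 2 by rewrite divr_ge0 ?exprn_ge0 ?mulr_ge0 ?ltW.
have /andP[_ hN] := truncn_itv c2.
exists (Num.truncn (2 * c / d ^+ 2)).+1 => n k Nn bk.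
have n1 : 1 <= n%:R :> R by rewrite ler1n (leq_trans _ Nn).
have cn : 2 * c < d ^+ 2 * n%:R.
  rewrite [d ^+ 2 * _]mulrC -ltr_pdivrMr ?exprn_gt0 //; apply: lt_le_trans hN _.
  by rewrite ler_nat.
have : (k%:R + 1) ^+ 2 < (d * n%:R) ^+ 2.
  apply: le_lt_trans (hc k) _; rewrite exprMn.
  have : c * b ^+ k <= c * (n%:R + 1) by rewrite ler_pM2l.
  nra.
by rewrite ltr_pXn2r ?nnegrE ?mulr_ge0 ?(ltW d0) // => /ltW.
Qed.
End Powers.
Lemma nat_near_itv (R : realType) (u w z : R) : 0 <= u -> u + 1 <= w -> u <= z <= w ->
  exists p : nat, u <= p%:R < w /\ `|p%:R - z| <= 1.
Proof.
move=> u0 uw /andP[uz zw].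
have /andP[fz zf] := truncn_itv (le_trans u0 uz); set f := Num.truncn z in fz zf.
rewrite -natr1 in zf.
have near_z (r : R) : z - 1 <= r <= z + 1 -> `|r - z| <= 1.
  by move=> /andP[? ?]; rewrite ler_norml; apply/andP; split; lra.
case: (ltP f%:R u) => [fu|uf].
  by exists f.+1; rewrite -natr1; split; [apply/andP; split|apply: near_z]; lra.
case: (ltP f%:R w) => [fw|wf].
  by exists f; split; [apply/andP|apply: near_z]; lra.
case: f fz zf uf wf => [|f] fz zf uf wf; first lra.
by exists f; rewrite -natr1 in fz zf uf wf *; split; [apply/andP; split|apply: near_z]; lra.
Qed.

Lemma nat_lt_le_succ {R : realType} {y : R} : 0 < y ->
  exists n : nat, n%:R < y <= n%:R + 1.
Proof.
move=> y0; have /andP[fy yf] := truncn_itv (ltW y0); set f := Num.truncn y in fy yf.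
rewrite -natr1 in yf; case: (ltP f%:R y) => [fy'|yf'].
  by exists f; rewrite fy' ltW.
case: f fy yf yf' => [|f] fy yf yf'; first lra.
by exists f; rewrite -natr1 in fy yf yf' *; apply/andP; split; lra.
Qed.

Lemma ratio_near_in_itvs (R : realType) (a x u v : R) : 0 < x -> 0 < u -> 0 < v ->
  u + 1 <= a * u -> v + 1 <= a * v -> u <= a * (x * v) -> x * v <= a * u ->
  exists p q : nat, [/\ u <= p%:R < a * u, v <= q%:R < a * v &
                        `|x - p%:R / q%:R| <= (1 + x) / v].
Proof.
move=> x0 u0 v0 uu vv uxv xvu.
have [Q [vQ Qv uQ Qu]] : exists Q, [/\ v <= Q, Q <= a * v, u <= x * Q & x * Q <= a * u].
  case: (leP u (x * v)) => [uxv'|xvu']; [exists v | exists (u / x)].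
    by split => //; lra.
  rewrite [x * (u / x)]mulrC divfK ?gt_eqF // ler_pdivlMr // ler_pdivrMr //.
  by split; nra.
have [p [/andP[up pu] pQ]] : exists p : nat, (u <= p%:R < a * u) /\ `|p%:R - x * Q| <= 1.
  by apply: nat_near_itv; rewrite ?(ltW u0) ?uQ ?Qu.
have [q [/andP[vq qv] qQ]] : exists q : nat, (v <= q%:R < a * v) /\ `|q%:R - Q| <= 1.
  by apply: nat_near_itv; rewrite ?(ltW v0) ?vQ ?Qv.
exists p, q; split; rewrite ?up ?vq //.
have q0 : 0 < q%:R :> R by apply: lt_le_trans vq.
have -> : x - p%:R / q%:R = (x * (q%:R - Q) - (p%:R - x * Q)) / q%:R by field; rewrite gt_eqF.
rewrite normrM normfV (gtr0_norm q0) ler_pdivrMr // mulrAC ler_pdivlMr //.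
have : `|x * (q%:R - Q) - (p%:R - x * Q)| <= 1 + x.
  apply: le_trans (ler_normB _ _) _; rewrite normrM (gtr0_norm x0).
  have : x * `|q%:R - Q| <= x * 1 by rewrite ler_pM2l.
  lra.
nra.
Qed.

Section CountUpto.
Implicit Types (A B : set nat) (n : nat).

Lemma count_upto0 A : count_upto A 0 = 0%N.
Proof. by rewrite /count_upto big_geq. Qed.

Lemma count_uptoS A n : count_upto A n.+1 = (count_upto A n + asbool (A n.+1))%N.
Proof. by rewrite /count_upto big_nat_recr. Qed.

Lemma count_upto_le A n : (count_upto A n <= n)%N.
Proof.
elim: n => [|n IH]; first by rewrite count_upto0.
by rewrite count_uptoS -addn1 leq_add //; case: asbool.
Qed.

Lemma eq_count_upto A B n : (forall m, (0 < m <= n)%N -> A m <-> B m) ->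
  count_upto A n = count_upto B n.
Proof.
move=> AB; apply: eq_big_nat => m /andP[m0 mn].
by rewrite (asbool_equiv_eq (AB m _)) // m0 -ltnS.
Qed.

Lemma le_count_upto A B n : A `<=` B -> (count_upto A n <= count_upto B n)%N.
Proof.
move=> AB; apply: leq_sum => m _.
by case: (asboolP (A m)) => // /AB /asboolP ->.
Qed.

Lemma count_uptoU A B n : A `&` B = set0 ->
  count_upto (A `|` B) n = (count_upto A n + count_upto B n)%N.
Proof.
move=> AB0; rewrite /count_upto -big_split; apply: eq_bigr => m _ /=.
case: (asboolP (A m)) => Am; case: (asboolP (B m)) => Bm.
- by have : (A `&` B) m by []; rewrite AB0.
- by rewrite asboolT //; left.
- by rewrite asboolT //; right.
- by rewrite asboolF // => -[].
Qed.

End CountUpto.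

Section CountIntervals.
Context {R : realType}.
Implicit Types (x y : R) (n : nat).

Lemma count_below_lt y n : 0 < y -> (count_upto [set m | m%:R < y] n)%:R < y.
Proof.
move=> y0; elim: n => [|n IH]; first by rewrite count_upto0.
rewrite count_uptoS natrD; case: (asboolP (n.+1%:R < y)) => [ny|_]; last by rewrite addr0.
have := count_upto_le [set m | m%:R < y] n; rewrite -(ler_nat R) -natr1 in ny *.
rewrite /=; lra.
Qed.

Lemma count_below_ge y n : let c := (count_upto [set m | m%:R < y] n)%:R in
  n%:R <= c \/ y - 1 <= c.
Proof.
elim: n => [|n IH] /=; first by left; rewrite count_upto0.
rewrite count_uptoS natrD -natr1; case: (asboolP (n.+1%:R < y)) => ny /=.
  by rewrite -natr1 in ny; case: IH; [left|right]; lra.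
move/negP: ny; rewrite -leNgt -natr1 /= => ny; right; case: IH; lra.
Qed.

Lemma count_below_split x y n : x <= y ->
  count_upto [set m | m%:R < y] n =
  (count_upto [set m | (x <= m%:R < y)%R] n + count_upto [set m | (m%:R < x)%R] n)%N.
Proof.
move=> xy; rewrite -count_uptoU; last first.
  by apply/seteqP; split => // m [/= /andP[xm _]]; rewrite ltNge xm.
congr count_upto; apply/seteqP; split => m /=.
  by case: (leP x m%:R) => [_ my|mx _]; [left|right].
by case => [/andP[]|mx] //; apply: lt_le_trans xy.
Qed.

Lemma count_itv_ge {x y} n : 0 < x -> x <= y ->
  let c := (count_upto [set m | (x <= m%:R < y)%R] n)%:R in
  n%:R - x <= c \/ y - x - 1 <= c.
Proof.
move=> x0 xy /=; have := count_below_lt x n x0.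
have := count_below_ge y n; rewrite /= (count_below_split _ _ n xy) natrD.
by case => h1 h2; [left|right]; lra.
Qed.

Lemma count_itv_lt {x y} n : 0 < x -> x <= y -> x <= n%:R + 1 ->
  (count_upto [set m | (x <= m%:R < y)%R] n)%:R < y - x + 1.
Proof.
move=> x0 xy xn; have := count_below_lt y n (lt_le_trans x0 xy).
have := count_below_ge x n; rewrite /= (count_below_split _ _ n xy) natrD.
by case => h1 h2; lra.
Qed.

End CountIntervals.

Lemma limn_einf_EFin_eq (R : realType) (u : nat -> R) (l : R) :
  (forall d, 0 < d -> exists N, forall n, (N <= n)%N -> l - d <= u n) ->
  (forall d N, 0 < d -> exists2 n, (N <= n)%N & u n <= l + d) ->
  limn_einf (fun n => (u n)%:E) = l%:E.
Proof.
move=> ev_ge freq_le; rewrite limn_einf_lim.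
rewrite (cvg_lim _ (@cvg_einfs_sup R _)) //; apply/eqP; rewrite eq_le; apply/andP; split.
- apply: ge_ereal_sup => _ [N _ <-]; apply/lee_addgt0Pr => d d0.
  have [n Nn und] := freq_le d N d0.
  by apply: ge_ereal_inf; exists (u n)%:E; [exists n | rewrite -EFinD lee_fin].
- apply/lee_subgt0Pr => d d0; have [N ud] := ev_ge d d0.
  apply: le_ereal_sup_tmp; exists (einfs (fun n => (u n)%:E) N); first by exists N.
  by apply: le_ereal_inf_tmp => _ [n Nn <-]; rewrite -EFinB lee_fin ud.
Qed.

Section Closure.
Variable R : realType.

Lemma closure_nonneg_eq (S : set R) : S `<=` [set x | 0 <= x] ->
  (forall x e : R, 0 < x -> 0 < e -> exists2 s, S s & `|x - s| < e) ->
  closure S = [set x | 0 <= x].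
Proof.
move=> S0 approx; apply/seteqP; split.
  by rewrite [X in _ `<=` X](closure_id _).1; [exact: closureS | exact: closed_ge].
move=> x /= x0 B /nbhs_ballP[e /= e0 eB].
have [s Ss xs] : exists2 s, S s & `|x - s| < e.
  move: x0; rewrite le_eqVlt => /orP[/eqP<-|xp]; last exact: approx.
  have e2 : 0 < e / 2 by rewrite divr_gt0.
  have [s Ss es] := approx _ _ e2 e2; exists s => //.
  move: es (S0 _ Ss); rewrite /= sub0r normrN !ltr_norml => /andP[? ?] ?.
  by apply/andP; split; lra.
by exists s; split => //; apply: eB; rewrite -ball_normE.
Qed.

Lemma not_in_closure_of_gap (S : set R) (u v : R) : u < v ->
  (forall s, S s -> s <= u \/ v <= s) -> ~ closure S ((u + v) / 2).
Proof.
move=> uv gap cS.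
have r0 : 0 < (v - u) / 2 by rewrite divr_gt0 // subr_gt0.
have [s [Ss]] := cS _ (nbhsx_ballx _ _ r0).
rewrite -ball_normE /= ltr_norml => /andP[? ?].
by case: (gap s Ss); lra.
Qed.

Lemma quotient_set_ge0 (A : set nat) : quotient_set R A `<=` [set x | 0 <= x].
Proof. by move=> _ [p [q [_ [_ ->]]]]; rewrite /= divr_ge0. Qed.

End Closure.

Section Blocks.
Variables (R : realType) (a b : R).
Hypotheses (a1 : 1 < a) (ab : a <= b).

Let b1 : 1 < b. Proof. exact: lt_le_trans ab. Qed.
Let a0 : 0 < a. Proof. exact: lt_trans a1. Qed.

Let expr_ge1 k : 1 <= b ^+ k. Proof. by rewrite exprn_ege1 // ltW. Qed.

Let expr_le_mono {i j} : (i <= j)%N -> b ^+ i <= b ^+ j.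
Proof. exact/ler_weXn2l/ltW. Qed.

Lemma block_end_le k : a * b ^+ k <= b ^+ k.+1.
Proof. by rewrite exprS ler_wpM2r // (le_trans ler01 (expr_ge1 k)). Qed.

Lemma Aab_intro k (m : nat) : b ^+ k <= m%:R -> m%:R < a * b ^+ k -> Aab R a b m.
Proof.
move=> km mk; split; last by exists k.
by rewrite -(ltr0n R) (lt_le_trans ltr01) // (le_trans (expr_ge1 k)).
Qed.

Lemma Aab_quotient_gap {p q : nat} : Aab R a b p -> Aab R a b q ->
  p%:R / q%:R < a \/ b / a < p%:R / q%:R.
Proof.
move=> [_ [k [kp pk]]] [q0 [l [lq ql]]].
have q0' : 0 < q%:R :> R by rewrite ltr0n.
case: (leqP k l) => [kl|lk]; [left|right].
  rewrite ltr_pdivrMr //; apply: lt_le_trans pk _.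
  by rewrite ler_pM2l // (le_trans (expr_le_mono kl)).
rewrite ltr_pdivlMr // mulrAC ltr_pdivrMr //.
have bp : b * b ^+ l <= p%:R by rewrite -exprS (le_trans (expr_le_mono lk)).
have : b * q%:R < b * (a * b ^+ l) by rewrite ltr_pM2l // (lt_trans ltr01).
have : a * (b * b ^+ l) <= a * p%:R by rewrite ler_pM2l.
have : 0 <= b ^+ l by apply: le_trans (expr_ge1 l).
nra.
Qed.

Lemma Aab_ratio_cover x : b <= a ^+ 2 -> 0 < x ->
  exists j m : nat, b ^+ j <= a * (x * b ^+ m) /\ x * b ^+ m <= a * b ^+ j.
Proof.
move=> ba x0; have [m] := expr_unbounded x^-1 b1.
rewrite -div1r ltr_pdivrMr // mulrC => /ltW.
suff cover y : 1 <= y -> exists j, b ^+ j <= a * y /\ y <= a * b ^+ j.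
  by move=> /cover[j ?]; exists j, m.
move=> y1; have [j [jy yj]] := expr_floor_log b1 y1.
have bj := expr_ge1 j.
case: (leP y (a * b ^+ j)) => [yaj|ajy]; [exists j | exists j.+1]; split => //.
- nra.
- have : a * (a * b ^+ j) < a * y by rewrite ltr_pM2l.
  have : (a ^+ 2 - b) * b ^+ j >= 0 by rewrite mulr_ge0 ?subr_ge0 // (le_trans ler01).
  by rewrite [b ^+ _.+1]exprS; nra.
- by apply: le_trans (ltW yj) (ler_peMl (le_trans ler01 (expr_ge1 _)) (ltW a1)).
Qed.

Lemma Aab_quotient_approx (x e : R) : b <= a ^+ 2 -> 0 < x -> 0 < e ->
  exists p q : nat, [/\ Aab R a b p, Aab R a b q & `|x - p%:R / q%:R| < e].
Proof.
move=> ba x0 e0; have [j [m [jm mj]]] := Aab_ratio_cover _ ba x0.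
have a1' : 0 < a - 1 by rewrite subr_gt0.
have [L hw] := expr_unbounded ((a - 1)^-1 + (1 + x) / e) b1.
have [bj bm] := (expr_ge1 j, expr_ge1 m).
have w1 := expr_ge1 L; set w := b ^+ L in w1 hw.
have aw : 1 < (a - 1) * w.
  rewrite mulrC -ltr_pdivrMr // div1r; apply: le_lt_trans hw.
  by rewrite lerDl divr_ge0 ?ltW ?addr_gt0.
have ew : 1 + x < e * w.
  by rewrite mulrC -ltr_pdivrMr //; apply: le_lt_trans hw; rewrite lerDr invr_ge0 ltW.
have [p [q [/andP[up pu] /andP[vq qv] pq]]] :
    exists p q : nat, [/\ b ^+ j * w <= p%:R < a * (b ^+ j * w),
      b ^+ m * w <= q%:R < a * (b ^+ m * w) & `|x - p%:R / q%:R| <= (1 + x) / (b ^+ m * w)].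
  apply: ratio_near_in_itvs => //; try nra.
exists p, q; split.
- by apply: (Aab_intro (j + L)); rewrite exprD.
- by apply: (Aab_intro (m + L)); rewrite exprD.
- apply: le_lt_trans pq _; rewrite ltr_pdivrMr ?mulr_gt0 //; nra.
Qed.
Lemma Aab_fractionally_dense : fractionally_dense R (Aab R a b) <-> b <= a ^+ 2.
Proof.
split=> [fd|ba].
  rewrite leNgt; apply/negP => ab2.
  apply: (@not_in_closure_of_gap _ (quotient_set R (Aab R a b)) a (b / a)).
  - by rewrite ltr_pdivlMr // -expr2.
  - move=> _ [p [q [Ap [Aq ->]]]] /=.
    by case: (Aab_quotient_gap Ap Aq) => h; [left|right]; apply: ltW.
  - rewrite fd /=; have : 0 < b / a by rewrite divr_gt0 // (lt_le_trans a0 ab).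
    have := a0; lra.
apply: closure_nonneg_eq; first exact: quotient_set_ge0.
move=> x e x0 e0; have [p [q [Ap Aq pq]]] := Aab_quotient_approx _ _ ba x0 e0.
by exists (p%:R / q%:R) => //; exists p, q.
Qed.


Local Notation dens := ((a - 1) / (b - 1)).
Local Notation count_below n y :=
  ((count_upto (Aab R a b `&` [set m | (m%:R < y)%R]) n)%:R : R).

Lemma Aab_below_succ K :
  Aab R a b `&` [set m | m%:R < b ^+ K.+1] =
  (Aab R a b `&` [set m | m%:R < b ^+ K]) `|` [set m | b ^+ K <= m%:R < a * b ^+ K].
Proof.
apply/seteqP; split => m /=.
  move=> [Am mK]; case: (ltP m%:R (b ^+ K)) => [mK'|Km]; first by left.
  right; apply/andP; split => //; case: Am => _ [k [km mk]].
  case: (ltngtP k K) => [kK|Kk|<-] //.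
    by have := block_end_le k; have := expr_le_mono kK; lra.
  by have := expr_le_mono Kk; lra.
case=> [[Am mK]|/andP[Km mK]].
  by split => //; apply: lt_le_trans mK (expr_le_mono (leqnSn K)).
by split; [exact: Aab_intro Km mK | apply: lt_le_trans mK (block_end_le K)].
Qed.

Lemma dens_expr_succ K :
  dens * (b ^+ K.+1 - 1) = dens * (b ^+ K - 1) + (a - 1) * b ^+ K.
Proof. by rewrite exprS; field; rewrite subr_eq0 gt_eqF. Qed.

Lemma count_Aab_below_succ n K : count_below n (b ^+ K.+1) =
  count_below n (b ^+ K) + (count_upto [set m | (b ^+ K <= m%:R < a * b ^+ K)%R] n)%:R.
Proof.
rewrite Aab_below_succ count_uptoU ?natrD //.
by apply/seteqP; split => // m [[_ /= mK] /andP[Km _]]; lra.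
Qed.

Lemma count_Aab_below {n K} : b ^+ K <= n%:R + 1 ->
  `|count_below n (b ^+ K) - dens * (b ^+ K - 1)| <= K%:R.
Proof.
elim: K => [_|K IH bK].
  rewrite expr0 subrr mulr0 subr0 normr_le0 pnatr_eq0.
  rewrite (@eq_count_upto _ set0) => [|m /andP[m0 _]].
    by rewrite /count_upto big1 // => m _; rewrite asboolF.
  by split => // -[_]; rewrite /= ltNge ler1n m0.
have [bK1 bK2] := (block_end_le K, expr_ge1 K).
move: IH; rewrite count_Aab_below_succ.
have abK : a * b ^+ K <= n%:R + 1 by apply: le_trans bK1 bK.
have bK0 : 0 < b ^+ K by apply: lt_le_trans bK2.
have bKa : b ^+ K <= a * b ^+ K by rewrite ler_peMl ?ltW.
have abK' : b ^+ K <= n%:R + 1 by apply: le_trans bKa abK.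
have blk_ge := count_itv_ge n bK0 bKa; have blk_lt := count_itv_lt n bK0 bKa abK'.
rewrite dens_expr_succ -natr1 => /(_ abK'); rewrite !ler_norml => /andP[? ?].
by apply/andP; case: blk_ge => ? ; split; lra.
Qed.

Let dens_ge0 : 0 <= dens.
Proof. by rewrite divr_ge0 // subr_ge0 ltW. Qed.

Let dens_le1 : dens <= 1.
Proof. by rewrite ler_pdivrMr ?subr_gt0 // mul1r lerD2r. Qed.

Lemma count_Aab_le {n K} : n%:R < b ^+ K -> b ^+ K <= n%:R + 1 ->
  (count_upto (Aab R a b) n)%:R <= dens * n%:R + K%:R.
Proof.
move=> nK Kn; have := count_Aab_below Kn; rewrite ler_norml => /andP[_].
suff -> : count_upto (Aab R a b) n =
          count_upto (Aab R a b `&` [set m | (m%:R < b ^+ K)%R]) n.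
  have : dens * (b ^+ K - 1) <= dens * n%:R by rewrite ler_wpM2l // lerBlDr.
  have := dens_ge0; lra.
apply: eq_count_upto => m /andP[_ mn]; split=> [Am|[]//]; split=> //=.
by apply: le_lt_trans nK; rewrite ler_nat.
Qed.

Lemma count_Aab_ge n : exists K, b ^+ K <= n%:R + 1 /\
  dens * n%:R - K%:R - 1 <= (count_upto (Aab R a b) n)%:R.
Proof.
have n1 : 1 <= n%:R + 1 :> R by rewrite lerDr.
have [K [Kn nK]] := expr_floor_log b1 n1.
exists K; split => //.
have : count_below n (b ^+ K.+1) <= (count_upto (Aab R a b) n)%:R.
  by rewrite ler_nat; apply: le_count_upto => m [].
rewrite count_Aab_below_succ.
have := count_Aab_below Kn; rewrite ler_norml => /andP[T_ge _].
have [bK0 bKa] : 0 < b ^+ K /\ b ^+ K <= a * b ^+ K.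
  by split; [apply: lt_le_trans ltr01 (expr_ge1 K) | apply: ler_peMl (ltW a1); apply: le_trans (expr_ge1 K)].
have dn : dens * (n%:R + 1) <= dens * b ^+ K.+1 by apply: ler_wpM2l => //; apply: ltW.
have dK : (1 - dens) * b ^+ K <= (1 - dens) * (n%:R + 1).
  by apply: ler_wpM2l; rewrite ?subr_ge0.
have := dens_expr_succ K; have := dens_le1.
by case: (count_itv_ge n bK0 bKa) => B_ge; lra.
Qed.


Lemma Aab_density_ge d : 0 < d -> exists N, forall n, (N <= n)%N ->
  dens - d <= (count_upto (Aab R a b) n)%:R / n%:R.
Proof.
move=> d0; have [N small] := expr_exponent_negligible d b1 d0.
exists N.+1 => n Nn; have n0 : 0 < n%:R :> R by rewrite ltr0n (leq_trans _ Nn).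
have [K [Kn cK]] := count_Aab_ge n.
have := small n K (ltnW Nn) Kn.
by rewrite ler_pdivlMr //; lra.
Qed.

Lemma Aab_density_le d N : 0 < d -> exists2 n, (N <= n)%N &
  (count_upto (Aab R a b) n)%:R / n%:R <= dens + d.
Proof.
move=> d0; have [N0 small] := expr_exponent_negligible d b1 d0.
have [K NK] := expr_unbounded (N%:R + N0%:R + 1) b1.
have [n /andP[nK Kn]] := nat_lt_le_succ (lt_le_trans ltr01 (expr_ge1 K)).
have [Nn N0n] : (N <= n)%N /\ (N0 <= n)%N.
  by rewrite -!(ler_nat R); have := ler0n R N; have := ler0n R N0; split; lra.
have n0 : 0 < n%:R :> R by have := ler0n R N; have := ler0n R N0; lra.
exists n => //; rewrite ler_pdivrMr //.
have := small n K N0n Kn; have := count_Aab_le nK Kn; lra.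
Qed.

End Blocks.

Theorem proposition1 (R : realType) (a b : R) (ha : 1 < a) (hab : a <= b) :
  (fractionally_dense R (Aab R a b) <-> b <= a ^+ 2) /\
  lower_density R (Aab R a b) = ((a - 1) / (b - 1))%:E.
Proof.
split; first exact: Aab_fractionally_dense.
apply: limn_einf_EFin_eq; [exact: Aab_density_ge | exact: Aab_density_le].
Qed.
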